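(* Let $q$ be a power of $2$. For $i=1,\dots,k$, let $b_i\in\mathbb{F}_q^*$, let $\delta\in\mathbb{F}_{q^2}$, and let $s_i$ be positive integers with $s_iq\equiv s_i\pmod{q^2-1}$. Then the polynomial $$P(x)=\sum_{i=1}^k b_i(x^q+x+\delta)^{s_i}+x$$ is an involution over $\mathbb{F}_{q^2}$.
   Context: A polynomial $P$ is an involution over $\mathbb{F}_{q^2}$ if it is a permutation polynomial of $\mathbb{F}_{q^2}$ equal to its own compositional inverse, i.e. $P(P(c))=c$ for all $c\in\mathbb{F}_{q^2}$. *)

From mathcomp Require Import all_boot all_order all_algebra all_field.
Set Implicit Arguments. Unset Strict Implicit. Unset Printing Implicit Defensive.
Import GRing.Theory.
Local Open Scope ring_scope.

Definition is_involution_poly (F : finFieldType) (P : {poly F}) : Prop :=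
  bijective (fun c : F => P.[c]) /\ forall c : F, P.[P.[c]] = c.

Definition inv_poly (F : finFieldType) (q k : nat) (b : 'I_k -> F)
    (s : 'I_k -> nat) (delta : F) : {poly F} :=
  \sum_(i < k) b i *: ('X^q + 'X + delta%:P) ^+ s i + 'X.

From mathcomp Require Import all_boot all_order all_algebra all_field.
Set Implicit Arguments. Unset Strict Implicit. Unset Printing Implicit Defensive.
Import GRing.Theory.
Local Open Scope ring_scope.

(* In characteristic 2 with q a power of 2, write T(x) = x^q + x + delta and
   P(x) = g(T(x)) + x, where g(y) = sum_i b_i y^(s_i).  Every value of g is
   fixed by y |-> y^q, because b_i is and s_i q = s_i mod (q^2 - 1).  Adding
   a q-fixed element u to x does not change T(x), since u^q + u = 2u = 0;
   hence T(P(x)) = T(x) and P(P(x)) = g(T(x)) + g(T(x)) + x = x. *)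

Section FrobeniusFixed.

Variables (R : comNzRingType) (q : nat).
Hypothesis pcharR_q : [pchar R].-nat q.

Lemma expr_sum_fixed (I : Type) (r : seq I) (P : pred I) (E : I -> R) :
    (forall i, P i -> E i ^+ q = E i) ->
  (\sum_(i <- r | P i) E i) ^+ q = \sum_(i <- r | P i) E i.
Proof.
move=> fixE; apply: (big_ind (fun z : R => z ^+ q = z)) => //.
- by case/andP: pcharR_q => q_gt0 _; rewrite expr0n eqn0Ngt q_gt0.
- by move=> u v fix_u fix_v; rewrite exprDn_pchar // fix_u fix_v.
Qed.

Hypothesis pcharR2 : 2%N \in [pchar R].

Lemma addr_fixed_trace (u x : R) : u ^+ q = u ->
  (u + x) ^+ q + (u + x) = x ^+ q + x.
Proof.
by move=> fix_u; rewrite exprDn_pchar // fix_u addrACA addrr_pchar2 ?add0r.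
Qed.

Lemma fixed_trace_involutive (delta : R) (g : R -> R) :
    (forall y, g y ^+ q = g y) ->
  involutive (fun x => g (x ^+ q + x + delta) + x).
Proof.
by move=> fix_g x /=; rewrite addr_fixed_trace // addKr_pchar2.
Qed.

End FrobeniusFixed.

Lemma exprM_fixed_card (F : finFieldType) (x : F) (s q : nat) :
    (0 < s)%N -> (0 < q)%N -> (s * q = s %[mod #|F| - 1])%N ->
  (x ^+ s) ^+ q = x ^+ s.
Proof.
move=> s_gt0 q_gt0 sq_eq_s; rewrite -exprM.
have [->|x_neq0] := eqVneq x 0.
  by rewrite !expr0n muln_eq0 !eqn0Ngt s_gt0 q_gt0.
have x_unit_order : x ^+ (#|F| - 1) = 1.
  apply: (mulIf x_neq0); rewrite mul1r -exprSr subn1 prednK ?expf_card //.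
  by apply/card_gt0P; exists x.
by rewrite -(expr_mod _ x_unit_order) sq_eq_s expr_mod.
Qed.

Lemma horner_inv_poly (F : finFieldType) (q k : nat) (b : 'I_k -> F)
    (s : 'I_k -> nat) (delta x : F) :
  (inv_poly q b s delta).[x] =
    \sum_(i < k) b i * (x ^+ q + x + delta) ^+ s i + x.
Proof.
rewrite /inv_poly hornerD hornerX horner_sum; congr (_ + _).
by apply: eq_bigr => i _; rewrite hornerZ !hornerE.
Qed.

Theorem theorem3p1 (F : finFieldType) (m : nat) (q : nat)
    (hq : q = (2 ^ m)%N) (hF : #|F| = (q ^ 2)%N)
    (k : nat) (b : 'I_k -> F) (s : 'I_k -> nat) (delta : F)
    (hb : forall i, b i != 0 /\ b i ^+ q = b i)
    (hs : forall i, (0 < s i)%N /\ (s i * q = s i %[mod q ^ 2 - 1])%N) :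
  is_involution_poly (inv_poly q b s delta).
Proof.
have pcharF2 : 2%N \in [pchar F].
  by apply: (@card_finPcharP F 2 (m * 2)); rewrite // hF hq -expnM.
have pcharF_q : [pchar F].-nat q.
  by rewrite (eq_pnat _ (pcharf_eq pcharF2)) hq pnatX pnat_id.
pose g (y : F) := \sum_(i < k) b i * y ^+ s i.
have fix_g y : g y ^+ q = g y.
  apply: expr_sum_fixed => // i _; have [_ fix_bi] := hb i.
  have [s_gt0 sq_eq_s] := hs i.
  by rewrite exprMn fix_bi exprM_fixed_card ?hF // hq expn_gt0.
have P_involutive : involutive (horner (inv_poly q b s delta)).
  move=> x; rewrite !horner_inv_poly -/(g _) -/(g _).
  exact: (fixed_trace_involutive pcharF_q pcharF2 delta fix_g).
by split; [apply: inv_bij | ].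
Qed.
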